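(* Let $T$ be a graph on a countably infinite set $X$ with bounded degree, $\mu$ a $T$-invariant mean on $X$ with associated measure $\bar\mu$ on $\beta X$, and let $W$ be a subgraph of $T$ with $V(W)=X$. Then for every integer $l\ge1$, the $\mu$-measure of the set of points $x\in X$ whose connected component in $W$ has exactly $l$ vertices equals the $\bar\mu$-measure of the set of points $\omega\in\beta X$ whose connected component in $\mathcal G(W)$ has exactly $l$ vertices.
   Context: A mean on $X$ is a finitely additive $\mu:2^X\to[0,1]$ with $\mu(X)=1$; $\bar\mu$ is the unique regular Borel probability on $\beta X$ (the ultrafilters on $X$) with $\bar\mu(U_A)=\mu(A)$ where $U_A=\{\omega:A\in\omega\}$. A mean is $T$-invariant if it is invariant under some (equivalently every) action of a finitely generated group on $X$ whose Schreier graph with respect to a finite symmetric generating set is $T$ (Schreier graph: edge $\{x,y\}$ when $x\neq y$ and $s(x)=y$ for a generator $s$). For a bounded degree graph $W$ on $X$, $\mathcal G(W)$ is the graph on $\beta X$ with an edge $\{\omega,\omega'\}$ when $\omega\neq\omega'$ and $\tilde s(\omega)=\omega'$ for a generator $s$ of some finitely generated group action on $X$ with Schreier graph $W$, where $\tilde s(\omega)=\{s(A):A\in\omega\}$; this does not depend on the chosen action. *)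

From Stdlib Require Import Reals List Relations.
Open Scope R_scope.

Set Implicit Arguments.

Definition set (A : Type) := A -> Prop.

Definition image {X : Type} (s : X -> X) (A : set X) : set X :=
  fun y => exists x, A x /\ s x = y.

Definition countably_infinite (X : Type) : Prop :=
  exists f : nat -> X, (forall n m, f n = f m -> n = m) /\ (forall x, exists n, f n = x).

Definition is_graph {V : Type} (G : V -> V -> Prop) : Prop :=
  (forall x y, G x y -> G y x) /\ (forall x, ~ G x x).

Definition bounded_degree {V : Type} (G : V -> V -> Prop) : Prop :=
  exists d : nat, forall x, exists ys : list V,
    (length ys <= d)%nat /\ forall y, G x y -> In y ys.

Definition has_card {V : Type} (P : set V) (l : nat) : Prop :=
  exists xs : list V, length xs = l /\ NoDup xs /\ forall y, In y xs <-> P y.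

Definition component {V : Type} (G : V -> V -> Prop) (v : V) : set V :=
  fun w => clos_refl_trans V G v w.

(* The action of a finitely generated group with finite symmetric generating
   set S on X is recorded by the list of the permutations of X induced by the
   elements of S; symmetry: the inverse of each generator is a generator. *)
Definition sym_gens {X : Type} (gens : list (X -> X)) : Prop :=
  forall s, In s gens -> exists t, In t gens /\
    (forall x, t (s x) = x) /\ (forall x, s (t x) = x).

Definition schreier {X : Type} (gens : list (X -> X)) (x y : X) : Prop :=
  x <> y /\ exists s, In s gens /\ s x = y.

Definition action_with_schreier {X : Type} (gens : list (X -> X))
  (G : X -> X -> Prop) : Prop :=
  sym_gens gens /\ forall x y, G x y <-> schreier gens x y.

Definition is_mean {X : Type} (mu : set X -> R) : Prop :=
  (forall A, 0 <= mu A <= 1) /\ mu (fun _ => True) = 1 /\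
  (forall A B, (forall x, ~ (A x /\ B x)) ->
      mu (fun x => A x \/ B x) = mu A + mu B).

Definition invariant_under {X : Type} (mu : set X -> R) (gens : list (X -> X)) : Prop :=
  forall s, In s gens -> forall A, mu (image s A) = mu A.

Definition T_invariant {X : Type} (T : X -> X -> Prop) (mu : set X -> R) : Prop :=
  exists gens, action_with_schreier gens T /\ invariant_under mu gens.

Definition is_ultrafilter {X : Type} (U : set (set X)) : Prop :=
  U (fun _ => True) /\ ~ U (fun _ => False) /\
  (forall A B, U A -> (forall x, A x -> B x) -> U B) /\
  (forall A B, U A -> U B -> U (fun x => A x /\ B x)) /\
  (forall A, U A \/ U (fun x => ~ A x)).

Definition beta (X : Type) := { U : set (set X) | is_ultrafilter U }.

Definition UA {X : Type} (A : set X) : set (beta X) := fun w => proj1_sig w A.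

Definition is_open {X : Type} (O : set (beta X)) : Prop :=
  forall w, O w -> exists A, proj1_sig w A /\ forall w', UA A w' -> O w'.

Definition is_closed {X : Type} (C : set (beta X)) : Prop :=
  is_open (fun w => ~ C w).

Inductive borel {X : Type} : set (beta X) -> Prop :=
| borel_open : forall O, is_open O -> borel O
| borel_compl : forall E, borel E -> borel (fun w => ~ E w)
| borel_union : forall E : nat -> set (beta X), (forall n, borel (E n)) ->
    borel (fun w => exists n, E n w).

Definition subset {V : Type} (A B : set V) : Prop := forall x, A x -> B x.

Definition is_glb (P : R -> Prop) (m : R) : Prop :=
  (forall r, P r -> m <= r) /\ (forall b, (forall r, P r -> b <= r) -> b <= m).

(* regular Borel probability measure on beta X (values on non-Borel sets
   are irrelevant) *)
Definition regular_borel_prob {X : Type} (m : set (beta X) -> R) : Prop :=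
  (forall E, borel E -> 0 <= m E) /\
  m (fun _ => True) = 1 /\
  (forall E : nat -> set (beta X), (forall n, borel (E n)) ->
     (forall i j w, E i w -> E j w -> i = j) ->
     infinite_sum (fun n => m (E n)) (m (fun w => exists n, E n w))) /\
  (forall E, borel E ->
     is_glb (fun r => exists O, is_open O /\ subset E O /\ r = m O) (m E) /\
     is_lub (fun r => exists C, is_closed C /\ subset C E /\ r = m C) (m E)).

Definition is_bar_mean {X : Type} (mu : set X -> R) (m : set (beta X) -> R) : Prop :=
  regular_borel_prob m /\ forall A, m (UA A) = mu A.

Definition tilde_is {X : Type} (s : X -> X) (w w' : beta X) : Prop :=
  forall B, proj1_sig w' B <->
    exists A, proj1_sig w A /\ forall y, B y <-> image s A y.

Definition GW {X : Type} (W : X -> X -> Prop) (w w' : beta X) : Prop :=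
  w <> w' /\ exists gens, action_with_schreier gens W /\
    exists s, In s gens /\ tilde_is s w w'.

From Stdlib Require Import Reals List Relations Arith Lia.
From Stdlib Require Import Classical ClassicalEpsilon FunctionalExtensionality
  PropExtensionality ProofIrrelevance.

(* Let A_l be the set of x whose W-component has exactly l points.
   As mbar (U_A) = mu A for every A, it suffices to show that an ultrafilter w
   has a G(W)-component of exactly l points iff A_l belongs to w.

   The G(W)-component of w consists of image ultrafilters push f w where f x is
   W-connected to x (component_is_push); conversely push f w lies in it as soon
   as f x is within W-distance n of x for w-almost every x (reach_push).  For
   the latter we need SOME action whose Schreier graph is W: it is built from a
   colouring separating points at distance <= 2, the generator sigma a b
   swapping the endpoints of the edges coloured {a, b}.  Images push f w and
   push g w differ when f x <> g x almost everywhere and both lie within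
   distance l of x, since a finite colouring separating points at distance
   <= 2l then separates them (push_separated).  Such colourings exist by a
   greedy construction along an enumeration of X, using bounded degree.
   Pushing w along an enumeration of the components of almost every x yields
   the equivalence (ultra_component_card_iff), and the theorem follows. *)

Fixpoint dist_le {X : Type} (W : X -> X -> Prop) (n : nat) (x y : X) : Prop :=
  match n with
  | 0 => x = y
  | S n => dist_le W n x y \/ exists z, dist_le W n x z /\ W z y
  end.

Section Ultrafilters.
Context {X : Type}.

Lemma uf_mono (w : beta X) (A B : set X) :
  proj1_sig w A -> (forall x, A x -> B x) -> proj1_sig w B.
Proof. destruct w as [U [H1 [H2 [H3 [H4 H5]]]]]; simpl; eauto. Qed.

Lemma uf_and (w : beta X) (A B : set X) :
  proj1_sig w A -> proj1_sig w B -> proj1_sig w (fun x => A x /\ B x).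
Proof. destruct w as [U [H1 [H2 [H3 [H4 H5]]]]]; simpl; eauto. Qed.

Lemma uf_em (w : beta X) (A : set X) : proj1_sig w A \/ proj1_sig w (fun x => ~ A x).
Proof. destruct w as [U [H1 [H2 [H3 [H4 H5]]]]]; simpl; eauto. Qed.

Lemma uf_all (w : beta X) (A : set X) : (forall x, A x) -> proj1_sig w A.
Proof.
  intros H. destruct w as [U [H1 [H2 [H3 [H4 H5]]]]]; simpl.
  apply (H3 (fun _ => True)); auto.
Qed.

Lemma uf_nonempty (w : beta X) (A : set X) : proj1_sig w A -> exists x, A x.
Proof.
  intros HA. apply NNPP; intro Hn.
  destruct w as [U [H1 [H2 [H3 [H4 H5]]]]]; simpl in *.
  apply H2, (H3 A); auto. intros x Hx; apply Hn; eauto.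
Qed.

Lemma uf_fin_or {I : Type} (L : list I) (w : beta X) (P : I -> set X) :
  proj1_sig w (fun x => exists i, In i L /\ P i x) ->
  exists i, In i L /\ proj1_sig w (P i).
Proof.
  induction L as [|a L IH]; intros H.
  - destruct (uf_nonempty w _ H) as [x [i [[] _]]].
  - destruct (uf_em w (P a)) as [Ha|Ha].
    + exists a; simpl; auto.
    + destruct IH as [i [Hi Hp]].
      * apply (uf_mono w _ _ (uf_and w _ _ H Ha)).
        intros x [[i [[<-|Hi] Hp]] Hn]; [contradiction|eauto].
      * exists i; simpl; auto.
Qed.

Lemma uf_choice {A : Type} (a0 : A) (w : beta X) (P : X -> A -> Prop) :
  proj1_sig w (fun x => exists a, P x a) -> exists f : X -> A, proj1_sig w (fun x => P x (f x)).
Proof.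
  intros H. exists (fun x => epsilon (inhabits a0) (P x)).
  apply (uf_mono w _ _ H). intros x Hx. apply epsilon_spec, Hx.
Qed.

Lemma beta_ext (w1 w2 : beta X) : (forall B, proj1_sig w1 B <-> proj1_sig w2 B) -> w1 = w2.
Proof.
  destruct w1 as [U1 P1], w2 as [U2 P2]; simpl; intros H.
  assert (U1 = U2) as <-.
  { apply functional_extensionality; intro B; apply propositional_extensionality; auto. }
  f_equal; apply proof_irrelevance.
Qed.

Lemma uf_incl_eq (w1 w2 : beta X) : (forall B, proj1_sig w1 B -> proj1_sig w2 B) -> w1 = w2.
Proof.
  intros H; apply beta_ext; intro B; split; auto.
  intros H2. destruct (uf_em w1 B) as [H1|H1]; auto.
  apply H in H1. destruct (uf_nonempty w2 _ (uf_and w2 _ _ H2 H1)) as [x [Hb Hnb]].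
  contradiction.
Qed.

(* The image ultrafilter: the action of the Stone-Cech extension of f. *)
Definition push (f : X -> X) (w : beta X) : beta X.
Proof.
  refine (exist _ (fun B => proj1_sig w (fun x => B (f x))) _).
  destruct w as [U [H1 [H2 [H3 [H4 H5]]]]]; simpl.
  split; [exact H1|split; [exact H2|split; [|split]]].
  - intros A B HA HB; apply (H3 _ _ HA); auto.
  - intros A B HA HB; apply (H4 _ _ HA HB).
  - intros A; apply (H5 (fun x => A (f x))).
Defined.

Lemma push_ext f g w : proj1_sig w (fun x => f x = g x) -> push f w = push g w.
Proof.
  intros H; apply uf_incl_eq; intros B HB; simpl in *.
  apply (uf_mono w _ _ (uf_and w _ _ H HB)). intros x [<- Hb]; auto.
Qed.

Lemma push_comp s f w : push s (push f w) = push (fun x => s (f x)) w.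
Proof. apply beta_ext; intro B; simpl; tauto. Qed.

Lemma push_id w : push (fun x => x) w = w.
Proof. apply beta_ext; intro B; destruct w; simpl; tauto. Qed.

Lemma push_neq f g w (S : set X) :
  proj1_sig w (fun x => S (f x)) -> proj1_sig w (fun x => ~ S (g x)) -> push f w <> push g w.
Proof.
  intros H1 H2 E. assert (H3 : proj1_sig (push g w) S) by (rewrite <- E; exact H1).
  simpl in H3. destruct (uf_nonempty w _ (uf_and w _ _ H3 H2)) as [x [Hs Hns]].
  contradiction.
Qed.

Lemma tilde_push_eq s w w' : tilde_is s w w' -> w' = push s w.
Proof.
  intros H; apply uf_incl_eq; intros B HB. apply H in HB. destruct HB as [A [HA HAB]].
  simpl. apply (uf_mono w _ _ HA). intros x Hx. apply HAB. exists x; auto.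
Qed.

Lemma tilde_push s t w : (forall y, s (t y) = y) -> tilde_is s w (push s w).
Proof.
  intros Hst B; simpl; split.
  - intros HB. exists (fun x => B (s x)); split; auto.
    intros y; split.
    + intros Hy. exists (t y). rewrite Hst; auto.
    + intros [x [Hx <-]]; auto.
  - intros [A [HA HAB]]. apply (uf_mono w _ _ HA). intros x Hx. apply HAB. exists x; auto.
Qed.

End Ultrafilters.

Section Cardinality.
Context {V : Type}.

Lemma card_le (P : set V) m L :
  has_card P m -> NoDup L -> (forall y, In y L -> P y) -> (length L <= m)%nat.
Proof.
  intros [xs [<- [Hn Hi]]] HN HL. apply NoDup_incl_length; auto.
  intros y Hy; apply Hi; auto.
Qed.

Lemma card_unique (P : set V) m k : has_card P m -> has_card P k -> m = k.
Proof.
  intros H1 H2. pose proof H1 as [xs [Hl [Hn Hi]]]. pose proof H2 as [ys [Hl2 [Hn2 Hi2]]].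
  pose proof (card_le P k xs H2 Hn (fun y Hy => proj1 (Hi y) Hy)).
  pose proof (card_le P m ys H1 Hn2 (fun y Hy => proj1 (Hi2 y) Hy)). lia.
Qed.

Lemma finite_or_large (P : set V) (n : nat) :
  (exists m, (m <= n)%nat /\ has_card P m) \/
  (exists L, length L = S n /\ NoDup L /\ forall y, In y L -> P y).
Proof.
  induction n as [|n IH].
  - destruct (classic (exists y, P y)) as [[y Hy]|Hno].
    + right. exists (y :: nil). split; [reflexivity|split].
      * constructor; [intros []|constructor].
      * intros z [<-|[]]; auto.
    + left. exists 0%nat. split; [lia|]. exists nil. split; [reflexivity|split; [constructor|]].
      intros y; split; [intros []|intros Hy; exfalso; eauto].
  - destruct IH as [[m [Hm Hc]]|[L [Hl [Hn Hi]]]].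
    + left. exists m; split; [lia|exact Hc].
    + destruct (classic (exists y, P y /\ ~ In y L)) as [[y [Hy Hni]]|Hno].
      * right. exists (y :: L). split; [simpl; congruence|split; [constructor; auto|]].
        intros z [<-|Hz]; auto.
      * left. exists (S n). split; [lia|]. exists L. split; [exact Hl|split; [exact Hn|]].
        intros y; split; [apply Hi|]. intros Hy. apply NNPP; intro Hny. apply Hno; eauto.
Qed.

End Cardinality.

Section Paths.
Context {X : Type} (W : X -> X -> Prop).
Hypothesis Wsym : forall x y, W x y -> W y x.

Lemma dist_le_mono n m x y : (n <= m)%nat -> dist_le W n x y -> dist_le W m x y.
Proof. induction 1; simpl; auto. Qed.

Lemma dist_le_step_left n x z y : W x z -> dist_le W n z y -> dist_le W (S n) x y.
Proof.
  revert y; induction n as [|n IH]; intros y Hw H; simpl in *.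
  - subst; right; exists x; auto.
  - destruct H as [H|[u [H1 H2]]].
    + specialize (IH y Hw H); simpl in IH; auto.
    + right; exists u; split; auto.
Qed.

Lemma dist_le_sym n x y : dist_le W n x y -> dist_le W n y x.
Proof.
  revert x y; induction n as [|n IH]; intros x y H; simpl in *; auto.
  destruct H as [H|[z [H1 H2]]]; auto.
  apply (dist_le_step_left n y z x); auto.
Qed.

Lemma dist_le_trans a b x y z : dist_le W a x y -> dist_le W b y z -> dist_le W (a + b) x z.
Proof.
  revert z; induction b as [|b IH]; intros z H1 H2; simpl in H2.
  - subst; rewrite Nat.add_0_r; auto.
  - rewrite Nat.add_succ_r; simpl. destruct H2 as [H2|[u [H2 H3]]]; eauto.
Qed.

Lemma dist_le_component n x y : dist_le W n x y -> component W x y.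
Proof.
  revert y; induction n as [|n IH]; intros y H; simpl in H.
  - subst; apply rt_refl.
  - destruct H as [H|[z [H1 H2]]]; auto.
    eapply rt_trans; [apply IH; eauto|apply rt_step; auto].
Qed.

Lemma component_radius n x :
  (forall y, component W x y -> dist_le W n x y) \/
  (exists L, length L = S n /\ NoDup L /\ forall y, In y L -> dist_le W n x y).
Proof.
  induction n as [|n IH].
  - right. exists (x :: nil). split; [reflexivity|split].
    + constructor; [intros []|constructor].
    + intros y [<-|[]]; reflexivity.
  - destruct IH as [H|[L [Hl [Hn Hi]]]].
    + left; intros y Hy; simpl; auto.
    + destruct (classic (exists y, dist_le W (S n) x y /\ ~ In y L)) as [[y [Hy Hni]]|Hno].
      * right. exists (y :: L). split; [simpl; auto|split; [constructor; auto|]].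
        intros z [<-|Hz]; simpl; auto.
      * left. intros y Hy. apply clos_rt_rtn1 in Hy.
        cut (dist_le W n x y); [simpl; auto|].
        induction Hy as [|y z Hyz Hy IHy].
        -- apply (dist_le_mono 0); [lia|reflexivity].
        -- apply Hi. apply NNPP; intro Hz. apply Hno. exists z; split; auto.
           simpl; right; eauto.
Qed.

Lemma small_component_radius n m x :
  (m <= n)%nat -> has_card (component W x) m -> forall y, component W x y -> dist_le W n x y.
Proof.
  intros Hm Hc. destruct (component_radius n x) as [H|[L [Hl [Hn Hi]]]]; auto.
  pose proof (card_le _ m L Hc Hn (fun y Hy => dist_le_component n x y (Hi y Hy))). lia.
Qed.

Lemma large_component_radius n x :
  (exists L, length L = S n /\ NoDup L /\ forall y, In y L -> component W x y) ->
  exists L, length L = S n /\ NoDup L /\ forall y, In y L -> dist_le W n x y.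
Proof.
  intros [L [Hl [Hn Hi]]]. destruct (component_radius n x) as [H|H]; auto.
  exists L; auto.
Qed.

End Paths.

Lemma bounded_degree_sub {X : Type} (W T : X -> X -> Prop) :
  (forall x y, W x y -> T x y) -> bounded_degree T -> bounded_degree W.
Proof.
  intros HWT [d Hd]. exists d. intros x. destruct (Hd x) as [ys [Hl Hy]].
  exists ys; auto.
Qed.

Section DistanceColouring.
Context {X : Type} (W : X -> X -> Prop).
Hypothesis Wsym : forall x y, W x y -> W y x.
Context (nb : X -> list X) (d : nat).
Hypothesis Hnb_len : forall x, (length (nb x) <= d)%nat.
Hypothesis Hnb : forall x y, W x y -> In y (nb x).
Context (e : nat -> X) (idx : X -> nat).
Hypothesis He : forall x, e (idx x) = x.
Context (R : nat).

Fixpoint ball (n : nat) (y : X) : list X :=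
  match n with 0 => y :: nil | S n => ball n y ++ flat_map nb (ball n y) end.

Lemma ball_in n y z : dist_le W n y z -> In z (ball n y).
Proof.
  revert z; induction n as [|n IH]; intros z H; simpl in *.
  - auto.
  - apply in_or_app. destruct H as [H|[u [H1 H2]]]; auto.
    right; apply in_flat_map; eauto.
Qed.

Lemma ball_len n y : (length (ball n y) <= (S d) ^ n)%nat.
Proof.
  assert (Hfm : forall L, (length (flat_map nb L) <= length L * d)%nat).
  { induction L as [|a L IH]; simpl; auto. rewrite length_app. specialize (Hnb_len a). lia. }
  induction n as [|n IH]; simpl; auto. rewrite length_app.
  pose proof (Hfm (ball n y)). nia.
Qed.

Definition ncolours := S ((S d) ^ R).

Definition new_colour (n : nat) (prev : list nat) : nat :=
  epsilon (inhabits 0%nat) (fun k => (k < ncolours)%nat /\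
    ~ In k (map (fun y => nth (idx y) prev 0%nat) (ball R (e n)))).

Lemma new_colour_spec n prev : (new_colour n prev < ncolours)%nat /\
  ~ In (new_colour n prev) (map (fun y => nth (idx y) prev 0%nat) (ball R (e n))).
Proof.
  unfold new_colour; apply epsilon_spec. apply NNPP; intro Hn.
  set (F := map (fun y => nth (idx y) prev 0%nat) (ball R (e n))).
  assert (Hinc : incl (seq 0 ncolours) F).
  { intros k Hk. apply in_seq in Hk. apply NNPP; intro Hk2. apply Hn; exists k; split; [lia|auto]. }
  pose proof (NoDup_incl_length (seq_NoDup ncolours 0) Hinc) as Hle.
  rewrite length_seq in Hle. unfold F in Hle; rewrite length_map in Hle.
  pose proof (ball_len R (e n)). unfold ncolours in Hle. lia.
Qed.

Fixpoint colour_list (n : nat) : list nat :=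
  match n with 0 => nil | S n => colour_list n ++ new_colour n (colour_list n) :: nil end.

Definition colour_of_index n := new_colour n (colour_list n).

Lemma colour_list_nth m n : (m < n)%nat -> nth m (colour_list n) 0%nat = colour_of_index m.
Proof.
  assert (Hlen : forall n, length (colour_list n) = n).
  { induction n0 as [|n0 IH]; simpl; auto. rewrite length_app; simpl; lia. }
  induction n as [|n IH]; intros H; [lia|]. simpl.
  destruct (Nat.eq_dec m n) as [->|Hne].
  - rewrite app_nth2; rewrite Hlen; [|lia]. rewrite Nat.sub_diag; reflexivity.
  - rewrite app_nth1; [|rewrite Hlen; lia]. apply IH; lia.
Qed.

Definition colour x := colour_of_index (idx x).

Lemma colour_later y z : (idx z < idx y)%nat -> dist_le W R y z -> colour y <> colour z.
Proof.
  intros Hlt HR Heq. destruct (new_colour_spec (idx y) (colour_list (idx y))) as [_ Hn].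
  apply Hn. rewrite He. apply in_map_iff. exists z; split; [|apply ball_in; auto].
  rewrite colour_list_nth; auto.
Qed.

Lemma colour_separates y z : y <> z -> dist_le W R y z -> colour y <> colour z.
Proof.
  intros Hne HR. destruct (lt_eq_lt_dec (idx z) (idx y)) as [[H|H]|H].
  - apply colour_later; auto.
  - exfalso; apply Hne. rewrite <- (He y), <- (He z); congruence.
  - intro E; symmetry in E; revert E; apply colour_later; auto. apply dist_le_sym; auto.
Qed.

End DistanceColouring.

Lemma distance_colouring_exists {X : Type} (W : X -> X -> Prop) (R : nat) :
  (forall x y, W x y -> W y x) -> bounded_degree W ->
  (exists e : nat -> X, forall x, exists n, e n = x) ->
  exists (c : X -> nat) (K : nat),
    (forall x, (c x < K)%nat) /\ forall y z, y <> z -> dist_le W R y z -> c y <> c z.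
Proof.
  intros Wsym [d Hbd] [e He].
  set (idx := fun x => epsilon (inhabits 0%nat) (fun n => e n = x)).
  set (nb := fun x => epsilon (inhabits nil)
    (fun ys => (length ys <= d)%nat /\ forall y, W x y -> In y ys)).
  assert (Hnb : forall x, (length (nb x) <= d)%nat /\ forall y, W x y -> In y (nb x)).
  { intro x; unfold nb; apply epsilon_spec, Hbd. }
  assert (Hidx : forall x, e (idx x) = x) by (intro x; unfold idx; apply epsilon_spec, He).
  exists (colour nb d e idx R), (ncolours d R). split.
  - intro x; apply new_colour_spec, Hnb.
  - apply colour_separates; auto; apply Hnb.
Qed.

(* From a colouring separating points at distance <= 2, an action with
   Schreier graph W: the involution sigma a b swaps the endpoints of every
   edge coloured {a, b} (such an edge at x is unique) and fixes the rest. *)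
Section EdgeSwapAction.
Context {X : Type} (W : X -> X -> Prop).
Hypothesis Wsym : forall x y, W x y -> W y x.
Hypothesis Wirr : forall x, ~ W x x.
Context (c : X -> nat) (K : nat).
Hypothesis c_lt : forall x, (c x < K)%nat.
Hypothesis c_sep : forall y z, y <> z -> dist_le W 2 y z -> c y <> c z.

Lemma neighbour_colour_inj x y z : W x y -> W x z -> c y = c z -> y = z.
Proof.
  intros H1 H2 E. apply NNPP; intro Hne. apply (c_sep y z Hne); auto.
  apply (dist_le_trans W 1 1 y x z); simpl; right; eauto.
Qed.

Definition coloured_edge a b x y :=
  (c x = a /\ W x y /\ c y = b) \/ (c x = b /\ W x y /\ c y = a).

Lemma coloured_edge_sym a b x y : coloured_edge a b x y -> coloured_edge a b y x.
Proof. unfold coloured_edge; intuition. Qed.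

Lemma coloured_edge_unique a b x y z :
  coloured_edge a b x y -> coloured_edge a b x z -> y = z.
Proof.
  unfold coloured_edge; intros H1 H2. apply (neighbour_colour_inj x); intuition congruence.
Qed.

Definition sigma a b x : X :=
  epsilon (inhabits x) (fun y => coloured_edge a b x y \/
    (~ (exists y', coloured_edge a b x y') /\ y = x)).

Lemma sigma_spec a b x : coloured_edge a b x (sigma a b x) \/
  (~ (exists y', coloured_edge a b x y') /\ sigma a b x = x).
Proof.
  unfold sigma; apply epsilon_spec.
  destruct (classic (exists y', coloured_edge a b x y')) as [[y Hy]|Hn]; eauto.
Qed.

Lemma sigma_edge a b x y : coloured_edge a b x y -> sigma a b x = y.
Proof.
  intros H. destruct (sigma_spec a b x) as [H2|[Hn _]].
  - eapply coloured_edge_unique; eauto.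
  - exfalso; eauto.
Qed.

Lemma sigma_invol a b x : sigma a b (sigma a b x) = x.
Proof.
  destruct (sigma_spec a b x) as [H|[_ E]].
  - apply sigma_edge, coloured_edge_sym, H.
  - rewrite E, E; reflexivity.
Qed.

Lemma sigma_moves_along_W a b x : sigma a b x <> x -> W x (sigma a b x).
Proof.
  intros Hne. destruct (sigma_spec a b x) as [H|[_ E]]; [|contradiction].
  unfold coloured_edge in H; intuition.
Qed.

Definition swap_gens : list (X -> X) :=
  flat_map (fun a => map (fun b => sigma a b) (seq 0 K)) (seq 0 K).

Lemma swap_gens_in s : In s swap_gens <-> exists a b, (a < K)%nat /\ (b < K)%nat /\ s = sigma a b.
Proof.
  unfold swap_gens; rewrite in_flat_map; split.
  - intros [a [Ha H]]. apply in_map_iff in H. destruct H as [b [<- Hb]].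
    apply in_seq in Ha, Hb. exists a, b; repeat split; lia.
  - intros [a [b [Ha [Hb ->]]]]. exists a; split; [apply in_seq; lia|].
    apply in_map_iff. exists b; split; [reflexivity|apply in_seq; lia].
Qed.

Lemma swap_gens_action : action_with_schreier swap_gens W.
Proof.
  split.
  - intros s Hs. exists s; split; auto.
    apply swap_gens_in in Hs. destruct Hs as [a [b [_ [_ ->]]]].
    split; intro; apply sigma_invol.
  - intros x y; split.
    + intros H. split; [intros <-; eapply Wirr; eauto|].
      exists (sigma (c x) (c y)); split.
      * apply swap_gens_in. exists (c x), (c y); auto.
      * apply sigma_edge; left; auto.
    + intros [Hne [s [Hs <-]]]. apply swap_gens_in in Hs.
      destruct Hs as [a [b [_ [_ ->]]]]. apply sigma_moves_along_W; auto.
Qed.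

End EdgeSwapAction.

Section UltraComponents.
Context {X : Type} (W : X -> X -> Prop).
Hypothesis Wsym : forall x y, W x y -> W y x.
Context (G : list (X -> X)).
Hypothesis HG : action_with_schreier G W.
Context (l : nat) (col : X -> nat) (K : nat).
Hypothesis col_lt : forall x, (col x < K)%nat.
Hypothesis col_sep : forall y z, y <> z -> dist_le W (l + l) y z -> col y <> col z.

Lemma component_is_push (w w' : beta X) : component (GW W) w w' ->
  exists f, (forall x, component W x (f x)) /\ w' = push f w.
Proof.
  intros H. apply clos_rt_rtn1 in H. induction H as [|w1 w2 Hstep _ IH].
  - exists (fun x => x); split; [intros; apply rt_refl|symmetry; apply push_id].
  - destruct IH as [f [Hf ->]].
    destruct Hstep as [_ [gens [[_ Hsch] [s [Hs Ht]]]]].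
    apply tilde_push_eq in Ht. subst w2. rewrite push_comp.
    exists (fun x => s (f x)); split; [|reflexivity].
    intros x. eapply rt_trans; [apply Hf|].
    destruct (classic (s (f x) = f x)) as [E|Ne].
    + rewrite E; apply rt_refl.
    + apply rt_step, Hsch. split; eauto.
Qed.

Lemma push_step (h f : X -> X) (w : beta X) :
  proj1_sig w (fun x => h x = f x \/ W (h x) (f x)) ->
  component (GW W) (push h w) (push f w).
Proof.
  intros H.
  destruct (uf_fin_or ((fun y => y) :: G) w (fun s x => s (h x) = f x)) as [s [Hin Hsw]].
  { apply (uf_mono w _ _ H). intros x [E|Hw].
    - exists (fun y => y); simpl; auto.
    - apply (proj2 HG) in Hw. destruct Hw as [_ [s [Hs E]]]. exists s; simpl; auto. }
  assert (E : push f w = push s (push h w)).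
  { rewrite push_comp. apply push_ext. apply (uf_mono w _ _ Hsw). auto. }
  rewrite E. destruct Hin as [<-|Hin].
  - rewrite push_id; apply rt_refl.
  - destruct (classic (push h w = push s (push h w))) as [Eq|Ne].
    + rewrite <- Eq; apply rt_refl.
    + apply rt_step. split; [exact Ne|]. exists G; split; [exact HG|].
      exists s; split; [exact Hin|].
      destruct (proj1 HG s Hin) as [t [_ [_ Hst]]]. eapply tilde_push; eauto.
Qed.

Lemma reach_push n : forall (f : X -> X) (w : beta X),
  proj1_sig w (fun x => dist_le W n x (f x)) -> component (GW W) w (push f w).
Proof.
  induction n as [|n IH]; intros f w H.
  - replace (push f w) with w; [apply rt_refl|].
    rewrite <- (push_id w) at 1. apply push_ext, H.
  - destruct (uf_nonempty w _ H) as [x0 _].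
    destruct (uf_choice x0 w (fun x z => dist_le W n x z /\ (z = f x \/ W z (f x))))
      as [h Hh].
    { apply (uf_mono w _ _ H). intros x [Hx|[z [H1 H2]]]; eauto. }
    apply rt_trans with (push h w).
    + apply IH. apply (uf_mono w _ _ Hh). tauto.
    + apply push_step. apply (uf_mono w _ _ Hh). tauto.
Qed.

Lemma push_separated f g (w : beta X) :
  proj1_sig w (fun x => dist_le W l x (f x) /\ dist_le W l x (g x) /\ f x <> g x) ->
  push f w <> push g w.
Proof.
  intros H.
  destruct (uf_fin_or (seq 0 K) w (fun a x => col (f x) = a)) as [a [_ Ha]].
  { apply uf_all. intros x. exists (col (f x)); split; [apply in_seq; specialize (col_lt (f x)); lia|reflexivity]. }
  apply (push_neq f g w (fun y => col y = a)); [exact Ha|].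
  apply (uf_mono w _ _ (uf_and w _ _ H Ha)). intros x [[H1 [H2 H3]] H4] E.
  apply (col_sep (f x) (g x)); [exact H3| |congruence].
  apply (dist_le_trans W l l _ x); auto. apply dist_le_sym; auto.
Qed.

Definition pushes (Lx : X -> list X) (m : nat) (w : beta X) : list (beta X) :=
  map (fun k => push (fun x => nth k (Lx x) x) w) (seq 0 m).

Lemma pushes_in_component (Lx : X -> list X) (m : nat) (w : beta X) :
  proj1_sig w (fun x => length (Lx x) = m /\ NoDup (Lx x) /\
                        forall y, In y (Lx x) -> dist_le W l x y) ->
  length (pushes Lx m w) = m /\ NoDup (pushes Lx m w) /\
  forall w', In w' (pushes Lx m w) -> component (GW W) w w'.
Proof.
  intros HL.
  assert (Hg : forall k, (k < m)%nat -> proj1_sig w (fun x => dist_le W l x (nth k (Lx x) x))).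
  { intros k Hk. apply (uf_mono w _ _ HL). intros x [Hl [_ Hi]]. apply Hi, nth_In; lia. }
  unfold pushes; split; [|split].
  - rewrite length_map, length_seq; reflexivity.
  - apply NoDup_map_NoDup_ForallPairs; [|apply seq_NoDup].
    intros k j Hk Hj E. apply in_seq in Hk, Hj. apply NNPP; intro Hne. revert E.
    apply push_separated.
    apply (uf_mono w _ _ (uf_and w _ _ (uf_and w _ _ (Hg k ltac:(lia)) (Hg j ltac:(lia))) HL)).
    intros x [[H1 H2] [Hl [Hn _]]]. repeat split; auto.
    intro E. apply Hne. eapply (proj1 (NoDup_nth (Lx x) x)); eauto; lia.
  - intros w' Hin. apply in_map_iff in Hin. destruct Hin as [k [<- Hk]]. apply in_seq in Hk.
    apply (reach_push l). apply Hg; lia.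
Qed.

Lemma ultra_component_card m (w : beta X) : (m <= l)%nat ->
  proj1_sig w (fun x => has_card (component W x) m) -> has_card (component (GW W) w) m.
Proof.
  intros Hm H.
  destruct (uf_choice nil w (fun x L => length L = m /\ NoDup L /\
    forall y, In y L <-> component W x y)) as [Lx HL]; [exact H|].
  assert (Hrad : proj1_sig w (fun x => length (Lx x) = m /\ NoDup (Lx x) /\
                                      forall y, In y (Lx x) -> dist_le W l x y)).
  { apply (uf_mono w _ _ (uf_and w _ _ HL H)). intros x [[Hl [Hn Hi]] Hc].
    repeat split; auto. intros y Hy. apply (small_component_radius W l m x Hm Hc), Hi, Hy. }
  destruct (pushes_in_component Lx m w Hrad) as [Hlen [Hnd Hin]].
  exists (pushes Lx m w). split; [exact Hlen|split; [exact Hnd|]].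
  intros w'; split; [apply Hin|intros Hc]. destruct (component_is_push w w' Hc) as [f [Hf ->]].
  destruct (uf_fin_or (seq 0 m) w (fun k x => f x = nth k (Lx x) x)) as [k [Hk Hkw]].
  { apply (uf_mono w _ _ HL). intros x [Hl [_ Hi]].
    destruct (In_nth _ _ x (proj2 (Hi (f x)) (Hf x))) as [k [Hk E]].
    exists k; split; [apply in_seq; lia|auto]. }
  apply in_map_iff. exists k; split; [symmetry; apply push_ext|]; auto.
Qed.

Lemma large_ultra_component (w : beta X) :
  proj1_sig w (fun x => exists L, length L = S l /\ NoDup L /\
                                  forall y, In y L -> component W x y) ->
  ~ has_card (component (GW W) w) l.
Proof.
  intros H Hc.
  destruct (uf_choice nil w (fun x L => length L = S l /\ NoDup L /\
    forall y, In y L -> dist_le W l x y)) as [Lx HL].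
  { apply (uf_mono w _ _ H). intros x Hx. apply large_component_radius; auto. }
  destruct (pushes_in_component Lx (S l) w) as [Hlen [Hnd Hin]].
  { apply (uf_mono w _ _ HL). intros x [Hl [Hn Hi]]. repeat split; auto. }
  pose proof (card_le _ _ _ Hc Hnd Hin). lia.
Qed.

Lemma ultra_component_card_iff (w : beta X) :
  has_card (component (GW W) w) l <-> proj1_sig w (fun x => has_card (component W x) l).
Proof.
  split; [|apply ultra_component_card; lia].
  intros Hc.
  destruct (uf_em w (fun x => exists L, length L = S l /\ NoDup L /\
                                        forall y, In y L -> component W x y)) as [Hlarge|Hsmall].
  - contradiction (large_ultra_component w Hlarge Hc).
  - destruct (uf_fin_or (seq 0 (S l)) w (fun m x => has_card (component W x) m)) as [m [Hm Hwm]].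
    { apply (uf_mono w _ _ Hsmall). intros x Hx.
      destruct (finite_or_large (component W x) l) as [[m [Hm Hcm]]|]; [|contradiction].
      exists m; split; [apply in_seq; lia|exact Hcm]. }
    apply in_seq in Hm.
    pose proof (card_unique _ _ _ (ultra_component_card m w ltac:(lia) Hwm) Hc) as ->.
    exact Hwm.
Qed.

End UltraComponents.

Open Scope R_scope.

Theorem lemma4p4 (X : Type) (T : X -> X -> Prop) (mu : set X -> R)
  (mbar : set (beta X) -> R) (W : X -> X -> Prop) (l : nat) :
  countably_infinite X ->
  is_graph T -> bounded_degree T ->
  is_mean mu -> T_invariant T mu ->
  is_bar_mean mu mbar ->
  is_graph W -> (forall x y, W x y -> T x y) ->
  (1 <= l)%nat ->
  mu (fun x => has_card (component W x) l) =
  mbar (fun w => has_card (component (GW W) w) l).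
Proof.
  intros [e [_ He]] _ HTbd _ _ [_ Hbar] [Wsym Wirr] HWT Hl.
  assert (Hbd : bounded_degree W) by exact (bounded_degree_sub W T HWT HTbd).
  destruct (distance_colouring_exists W 2 Wsym Hbd (ex_intro _ e He)) as [c2 [K2 [Hc2 Hsep2]]].
  destruct (distance_colouring_exists W (l + l) Wsym Hbd (ex_intro _ e He)) as [c [K [Hc Hsep]]].
  pose proof (swap_gens_action W Wsym Wirr c2 K2 Hc2 Hsep2) as HG.
  rewrite <- Hbar. f_equal. apply functional_extensionality; intro w.
  apply propositional_extensionality. symmetry.
  exact (ultra_component_card_iff W Wsym _ HG l c K Hc Hsep w).
Qed.
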